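(* Let $n\in\mathbb{N}$, $p\in(0,1)$, $q=1-p$, and let $G\in\mathcal{G}(n,p)$ with algebraic connectivity $\lambda_2$. Then \[ \max\{np-\sqrt{2n(n-2)pq},\,0\}\le \mathbb{E}[\lambda_2]\le np. \]
   Context: $\mathcal{G}(n,p)$ denotes the Erdős–Rényi model: a simple undirected graph on nodes $[n]$ in which each possible edge is present independently with probability $p$. The Laplacian is $L=D-A$ (degree matrix minus adjacency matrix); its eigenvalues are $0=\lambda_1\le\lambda_2\le\dots\le\lambda_n$, and the algebraic connectivity of $G$ is $\lambda_2(L)$. *)

From HB Require Import structures.
From mathcomp Require Import all_boot all_order all_algebra.
From mathcomp Require Import reals.
From Stdlib Require Import ClassicalEpsilon.
Set Implicit Arguments. Unset Strict Implicit. Unset Printing Implicit Defensive.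
Import Order.TTheory GRing.Theory Num.Theory.
Local Open Scope ring_scope.

(* Potential edges of a simple graph on [n] = 'I_n : the 2-element subsets. *)
Definition pairs (n : nat) : {set {set 'I_n}} := [set e : {set 'I_n} | #|e| == 2%N].

(* A simple graph on 'I_n is an edge set E with E \subset pairs n. *)
Definition adj (n : nat) (E : {set {set 'I_n}}) (i j : 'I_n) : bool :=
  (i != j) && ([set i; j] \in E).

Definition laplacian (R : pzRingType) (n : nat) (E : {set {set 'I_n}}) : 'M[R]_n :=
  \matrix_(i, j) ((if i == j then (#|[set k | adj E i k]|)%:R else 0)
                  - (adj E i j)%:R).

Definition is_sorted_spectrum (R : realType) (n : nat) (M : 'M[R]_n) (s : seq R) : Prop :=
  sorted <=%R s /\ char_poly M = \prod_(x <- s) ('X - x%:P).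

Definition sorted_spectrum (R : realType) (n : nat) (M : 'M[R]_n) : seq R :=
  epsilon (inhabits [::]) (is_sorted_spectrum M).

(* lambda_k (1-indexed) *)
Definition eigen_k (R : realType) (n : nat) (M : 'M[R]_n) (k : nat) : R :=
  nth 0 (sorted_spectrum M) k.-1.

Definition alg_conn (R : realType) (n : nat) (E : {set {set 'I_n}}) : R :=
  eigen_k (laplacian R E) 2.

Definition gnp_prob (R : realType) (n : nat) (p : R) (E : {set {set 'I_n}}) : R :=
  if E \subset pairs n then p ^+ #|E| * (1 - p) ^+ (#|pairs n| - #|E|) else 0.

Definition gnp_expect (R : realType) (n : nat) (p : R) (f : {set {set 'I_n}} -> R) : R :=
  \sum_(E : {set {set 'I_n}}) gnp_prob p E * f E.

(* For a fixed graph, let 0 = lambda_1 <= lambda_2 <= ... <= lambda_n be the spectrum of its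
   Laplacian L (real, since L is symmetric, and nonnegative, since L is positive semidefinite
   with the constant vector in its kernel).  The n - 1 values lambda_2, ..., lambda_n are at
   least lambda_2, sum to tr L and have square sum tr (L^2).  Hence (n - 1) lambda_2 <= tr L,
   and, the term i = 2 of sum_(i >= 2) ((n - 1) lambda_i - tr L)^2 = (n - 1) ((n - 1) tr (L^2)
   - (tr L)^2) being ((n - 1) lambda_2 - tr L)^2, X := tr L - (n - 1) lambda_2 satisfies
   X^2 <= (n - 1) ((n - 1) tr (L^2) - (tr L)^2).
   Both traces are polynomials of degree <= 2 in the edge indicators, so the first two
   moments of the indicators under G(n,p) give E[tr L] = n (n - 1) p and
   E[(n - 1) tr (L^2) - (tr L)^2] = 2 n (n - 1) (n - 2) p q.  Taking expectations in the
   first inequality gives E[lambda_2] <= n p; Jensen's inequality E[X]^2 <= E[X^2] with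
   E[X] = (n - 1) (n p - E[lambda_2]) gives (n p - E[lambda_2])^2 <= 2 n (n - 2) p q. *)

From HB Require Import structures.
From mathcomp Require Import all_boot all_order all_algebra.
From mathcomp Require Import reals complex ring lra.
From Stdlib Require Import ClassicalEpsilon.
Set Implicit Arguments. Unset Strict Implicit. Unset Printing Implicit Defensive.
Import Order.TTheory GRing.Theory Num.Theory.
Local Open Scope ring_scope.

Section Similarity.
Variables (F : fieldType) (n : nat) (P : 'M[F]_n).
Hypothesis P_unit : P \in unitmx.
Local Notation conj A := (invmx P *m A *m P).

Lemma char_poly_conj (A : 'M[F]_n) : char_poly (conj A) = char_poly A.
Proof.
set Q := map_mx polyC P; set Qi := map_mx polyC (invmx P).
have QiQ : Qi *m Q = 1%:M by rewrite -map_mxM mulVmx // map_mx1.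
have QQi : Q *m Qi = 1%:M by rewrite -map_mxM mulmxV // map_mx1.
have conjE : char_poly_mx (conj A) = Qi *m char_poly_mx A *m Q.
  rewrite /char_poly_mx !map_mxM mulmxBr mulmxBl -/Q -/Qi; congr (_ - _).
  by rewrite -mulmxA -scalar_mxC mulmxA QiQ mul1mx.
by rewrite /char_poly conjE !det_mulmx mulrC mulrA -det_mulmx QQi det1 mul1r.
Qed.

Lemma mxtrace_conj (A : 'M[F]_n) : \tr (conj A) = \tr A.
Proof. by rewrite mxtrace_mulC mulmxA mulmxV // mul1mx. Qed.

Lemma mulmx_conj (A B : 'M[F]_n) : conj A *m conj B = conj (A *m B).
Proof. by rewrite !mulmxA -(mulmxA _ P) mulmxV // mulmx1. Qed.

End Similarity.

Section RealSymmetric.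
Variables (R : rcfType) (n : nat).
Local Notation toC := (real_complex R).

Lemma realsym_diagonalization (A : 'M[R]_n) : A^T = A ->
  exists2 P : 'M[R[i]]_n, P \in unitmx &
    exists d : 'rV[R]_n, map_mx toC A = invmx P *m map_mx toC (diag_mx d) *m P.
Proof.
move=> A_sym; set AC := map_mx toC A.
have AC_herm : AC \is hermsymmx.
  apply: realsym_hermsym.
    apply/is_hermitianmxP; rewrite expr0 scale1r.
    by apply/matrixP => i j; rewrite /AC !mxE /= -{1}A_sym mxE.
  by apply/mxOverP => i j; rewrite mxE; apply/complex_realP; eexists.
have /orthomx_spectralP AC_diag := hermitian_normalmx AC_herm.
have /mxOverP d_real := hermitian_spectral_diag_real AC_herm.
exists (spectralmx AC); first exact: spectral_unit.
exists (\row_j complex.Re (spectral_diag AC 0 j)).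
rewrite map_diag_mx {1}AC_diag; congr (_ *m diag_mx _ *m _).
by apply/rowP => j; rewrite !mxE; apply/esym/RRe_real/d_real.
Qed.

Lemma realsym_spectrum (A : 'M[R]_n) : A^T = A ->
  exists r : seq R, [/\ size r = n, char_poly A = \prod_(x <- r) ('X - x%:P),
     \sum_(x <- r) x = \tr A & \sum_(x <- r) x ^+ 2 = \tr (A *m A)].
Proof.
move=> /realsym_diagonalization [P P_unit [d AE]]; set D := diag_mx d in AE.
have toC_inj : injective toC := @fmorph_inj _ _ toC.
have charAD : char_poly A = char_poly D.
  by apply: (@map_poly_inj _ _ toC); rewrite !map_char_poly AE char_poly_conj.
have trAD : \tr A = \tr D.
  by apply: toC_inj; rewrite -!trace_map_mx AE mxtrace_conj.
have trAAD : \tr (A *m A) = \tr (D *m D).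
  by apply: toC_inj; rewrite -!trace_map_mx !map_mxM AE mulmx_conj ?mxtrace_conj.
exists [seq d 0 j | j <- enum 'I_n]; split.
- by rewrite size_map size_enum_ord.
- rewrite charAD char_poly_trig ?diag_mx_is_trig // big_map big_enum.
  by apply: eq_bigr => j _; rewrite mxE eqxx mulr1n.
- by rewrite trAD mxtrace_diag big_map big_enum.
- rewrite trAAD mulmx_diag mxtrace_diag big_map big_enum.
  by apply: eq_bigr => j _; rewrite mxE expr2.
Qed.

End RealSymmetric.

Definition degree (R : pzSemiRingType) (n : nat) (E : {set {set 'I_n}}) (i : 'I_n) : R :=
  \sum_j (adj E i j)%:R.

Lemma adjC n (E : {set {set 'I_n}}) i j : adj E i j = adj E j i.
Proof. by rewrite /adj eq_sym setUC. Qed.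

Lemma adjnn n (E : {set {set 'I_n}}) i : adj E i i = false.
Proof. by rewrite /adj eqxx. Qed.

Section Laplacian.
Variables (R : comPzRingType) (n : nat) (E : {set {set 'I_n}}).
Local Notation L := (laplacian R E).
Local Notation a i j := ((adj E i j)%:R : R).
Local Notation deg := (degree R E).

Lemma degreeE i : deg i = #|[set k | adj E i k]|%:R.
Proof.
rewrite -sum1dep_card natr_sum big_mkcond.
by apply: eq_bigr => j _; case: adj.
Qed.

Lemma laplacianE i j : L i j = (i == j)%:R * deg i - a i j.
Proof. by rewrite mxE degreeE; case: eqP; rewrite ?mul1r ?mul0r. Qed.

Lemma laplacian_sym : L^T = L.
Proof.
apply/matrixP => i j; rewrite mxE !laplacianE.
by case: (eqVneq i j) => [-> // | _]; rewrite !mul0r adjC.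
Qed.

Lemma mxtrace_laplacian : \tr L = \sum_i deg i.
Proof. by apply: eq_bigr => i _; rewrite laplacianE eqxx mul1r adjnn subr0. Qed.

Lemma mxtrace_laplacian_sqr : \tr (L *m L) = \sum_i (deg i ^+ 2 + deg i).
Proof.
apply: eq_bigr => i _; rewrite mxE (bigD1 i) //= laplacianE eqxx mul1r adjnn subr0.
congr (_ + _); rewrite /degree [in RHS](bigD1 i) //= adjnn add0r.
apply: eq_bigr => j /negbTE ji.
rewrite !laplacianE [i == j]eq_sym ji !mul0r !sub0r mulrNN [adj E j i]adjC.
by case: adj; rewrite ?mulr1 ?mulr0.
Qed.

Lemma laplacian_const_mx : (const_mx 1 : 'rV[R]_n) *m L = 0.
Proof.
apply/rowP => j; rewrite !mxE.
under eq_bigr => i _ do rewrite mxE mul1r laplacianE.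
rewrite sumrB (bigD1 j) //= eqxx mul1r big1 => [|i /negbTE ij]; last first.
  by rewrite ij mul0r.
by rewrite addr0 /degree; under [X in _ - X]eq_bigr do rewrite adjC; rewrite subrr.
Qed.

Lemma laplacian_form (v : 'rV[R]_n) :
  2 * (v *m L *m v^T) 0 0 = \sum_i \sum_j a i j * (v 0 i - v 0 j) ^+ 2.
Proof.
have form : (v *m L *m v^T) 0 0 =
    \sum_i \sum_j (a i j * v 0 i ^+ 2 - a i j * (v 0 i * v 0 j)).
  rewrite mxE; under eq_bigr => j _ do rewrite !mxE mulr_suml.
  rewrite exchange_big /=; apply: eq_bigr => i _.
  under eq_bigr => j _ do rewrite laplacianE mulrBr mulrBl.
  rewrite !sumrB; congr (_ - _); last by apply: eq_bigr => j _; ring.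
  rewrite (bigD1 i) //= big1 => [|j /negbTE ij]; last first.
    by rewrite [i == j]eq_sym ij !mul0r mulr0 mul0r.
  by rewrite eqxx mul1r addr0 /degree mulr_sumr mulr_suml; apply: eq_bigr => j _; ring.
have swap : \sum_i \sum_j (a i j * v 0 j ^+ 2 - a i j * (v 0 i * v 0 j)) =
            \sum_i \sum_j (a i j * v 0 i ^+ 2 - a i j * (v 0 i * v 0 j)).
  rewrite exchange_big; apply: eq_bigr => i _; apply: eq_bigr => j _.
  by rewrite [adj E j i]adjC [v 0 j * _]mulrC.
rewrite mulr2n mulrDl mul1r {2}form -swap form -big_split; apply: eq_bigr => i _.
by rewrite -big_split; apply: eq_bigr => j _ /=; ring.
Qed.

End Laplacian.

Lemma laplacian_form_ge0 (R : realDomainType) n (E : {set {set 'I_n}}) (v : 'rV[R]_n) :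
  0 <= (v *m laplacian R E *m v^T) 0 0.
Proof.
rewrite -(pmulr_rge0 _ (ltr0Sn R 1)) laplacian_form.
by apply: sumr_ge0 => i _; apply: sumr_ge0 => j _; apply: mulr_ge0; rewrite ?sqr_ge0.
Qed.

Lemma laplacian_eigenvalue_ge0 (R : realFieldType) n (E : {set {set 'I_n}}) (x : R) :
  eigenvalue (laplacian R E) x -> 0 <= x.
Proof.
case/eigenvalueP => v vL v_neq0.
have vv_gt0 : 0 < (v *m v^T) 0 0.
  rewrite mxE lt_def sumr_ge0 ?andbT => [|j _]; last by rewrite mxE -expr2 sqr_ge0.
  apply: contra v_neq0 => /eqP vv0; apply/eqP/rowP => j; apply/eqP.
  have /(_ j isT) : forall j, true -> v 0 j * v^T j 0 = 0.
    by apply: psumr_eq0P vv0 => k _; rewrite mxE -expr2 sqr_ge0.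
  by rewrite !mxE -expr2 => /eqP; rewrite sqrf_eq0.
by have := laplacian_form_ge0 E v; rewrite vL -scalemxAl mxE pmulr_lge0.
Qed.

Lemma laplacian_eigenvalue0 (R : fieldType) n (E : {set {set 'I_n}}) :
  (0 < n)%N -> eigenvalue (laplacian R E) 0.
Proof.
move=> n_gt0; apply/eigenvalueP; exists (const_mx 1).
  by rewrite laplacian_const_mx scale0r.
by apply/negP => /eqP/rowP/(_ (Ordinal n_gt0)); rewrite !mxE => /eqP; rewrite oner_eq0.
Qed.

Section SumsOverLists.
Variable R : realDomainType.
Implicit Types (l : seq R) (y : R).

Lemma sorted_ge0_mem0 l : sorted <=%R l -> all (>= 0) l -> 0 \in l -> l = 0 :: behead l.
Proof.
case: l => [//|x l] /= l_sorted /andP [x_ge0 _].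
have /allP x_min := order_path_min le_trans l_sorted.
rewrite inE => /predU1P [<- // | /x_min x_le0].
by congr (_ :: _); apply/le_anti; rewrite x_le0 x_ge0.
Qed.

Lemma size_mul_le_sum l y : {in l, forall z, y <= z} -> (size l)%:R * y <= \sum_(z <- l) z.
Proof.
elim: l => [|x l IH] l_ge; first by rewrite big_nil mul0r.
rewrite big_cons /= -addn1 natrD mulrDl mul1r addrC lerD ?l_ge ?mem_head //.
by apply: IH => z zl; apply: l_ge; rewrite inE zl orbT.
Qed.

Lemma sqr_dev_le_dispersion l y : y \in l ->
  ((size l)%:R * y - \sum_(z <- l) z) ^+ 2 <=
  (size l)%:R * ((size l)%:R * \sum_(z <- l) z ^+ 2 - (\sum_(z <- l) z) ^+ 2).
Proof.
move=> yl; set m := (size l)%:R; set T := \sum_(z <- l) z.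
have sum_cst c : \sum_(z <- l) c = m * c.
  rewrite /m; elim: (l) => [|x s IH]; first by rewrite big_nil mul0r.
  by rewrite big_cons IH /= -addn1 natrD; ring.
have var : \sum_(z <- l) (m * z - T) ^+ 2 = m * (m * \sum_(z <- l) z ^+ 2 - T ^+ 2).
  under eq_bigr do rewrite sqrrB exprMn.
  by rewrite !big_split /= sumrN !sum_cst sumrMnl -mulr_suml -!mulr_sumr -/T; ring.
rewrite -var (perm_big _ (perm_to_rem yl)) big_cons lerDl.
by apply: sumr_ge0 => z _; apply: sqr_ge0.
Qed.

End SumsOverLists.

Section SortedSpectrum.
Variables (R : realType) (n : nat) (A : 'M[R]_n).
Hypothesis A_sym : A^T = A.
Local Notation s := (sorted_spectrum A).

Lemma sorted_spectrum_sym :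
  [/\ sorted <=%R s, char_poly A = \prod_(x <- s) ('X - x%:P), size s = n,
      \sum_(x <- s) x = \tr A & \sum_(x <- s) x ^+ 2 = \tr (A *m A)].
Proof.
have [r [r_size charAr sumr sumr2]] := realsym_spectrum A_sym.
have [s_sorted charAs] : is_sorted_spectrum A s.
  apply: epsilon_spec; exists (sort <=%R r); split; first exact: sort_le_sorted.
  by rewrite charAr; apply: perm_big; rewrite perm_sym perm_sort.
have sr : perm_eq s r by apply: prod_XsubC_eq; rewrite -charAs -charAr.
by split; rewrite // ?(perm_size sr) ?(perm_big _ sr).
Qed.

Lemma mem_sorted_spectrum x : (x \in s) = eigenvalue A x.
Proof.
have [_ charAs _ _ _] := sorted_spectrum_sym.
by rewrite eigenvalue_root_char charAs root_prod_XsubC.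
Qed.

End SortedSpectrum.

Section AlgebraicConnectivity.
Variables (R : realType) (n : nat) (E : {set {set 'I_n}}).
Hypothesis n_gt1 : (1 < n)%N.
Local Notation L := (laplacian R E).
Local Notation lambda2 := (alg_conn R E).

Let l := behead (sorted_spectrum L).

Let L_sym := laplacian_sym R E.

Let spectrumE : sorted_spectrum L = 0 :: l.
Proof.
have [s_sorted _ _ _ _] := sorted_spectrum_sym L_sym.
apply: sorted_ge0_mem0 => //; last first.
  by rewrite mem_sorted_spectrum // laplacian_eigenvalue0 // ltnW.
by apply/allP => x; rewrite mem_sorted_spectrum //; apply: laplacian_eigenvalue_ge0.
Qed.

Let tailE : l = lambda2 :: behead l.
Proof.
have [_ _ s_size _ _] := sorted_spectrum_sym L_sym.
have := congr1 size spectrumE; rewrite s_size /alg_conn /eigen_k spectrumE /=.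
by case: l => [|x t] //= n1; move: n_gt1; rewrite n1.
Qed.

Let l_size : size l = n.-1.
Proof. by case: (sorted_spectrum_sym L_sym) => _ _ s_size _ _; rewrite size_behead s_size. Qed.

Let sum_l : \sum_(x <- l) x = \tr L.
Proof.
case: (sorted_spectrum_sym L_sym) => _ _ _ <- _.
by rewrite [in RHS]spectrumE big_cons add0r.
Qed.

Let sum_sqr_l : \sum_(x <- l) x ^+ 2 = \tr (L *m L).
Proof.
case: (sorted_spectrum_sym L_sym) => _ _ _ _ <-.
by rewrite [in RHS]spectrumE big_cons expr0n add0r.
Qed.

Lemma alg_conn_ge0 : 0 <= lambda2.
Proof.
have := mem_sorted_spectrum L_sym lambda2.
by rewrite spectrumE tailE !inE eqxx orbT => /esym /laplacian_eigenvalue_ge0.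
Qed.

Lemma alg_conn_le_mxtrace : n.-1%:R * lambda2 <= \tr L.
Proof.
rewrite -sum_l -l_size; apply: size_mul_le_sum.
have [+ _ _ _ _] := sorted_spectrum_sym L_sym.
rewrite spectrumE tailE /= => /andP [_ l_path] z.
rewrite inE => /predU1P [-> // | ].
exact/allP/(order_path_min le_trans l_path).
Qed.

Lemma sqr_mxtrace_sub_alg_conn_le :
  (\tr L - n.-1%:R * lambda2) ^+ 2 <= n.-1%:R * (n.-1%:R * \tr (L *m L) - \tr L ^+ 2).
Proof.
rewrite -sum_l -sum_sqr_l -l_size -sqrrN opprB.
by apply: sqr_dev_le_dispersion; rewrite tailE mem_head.
Qed.

End AlgebraicConnectivity.

Lemma sum_nat_mem (R : pzSemiRingType) (T : finType) (A : {pred T}) :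
  \sum_x ((x \in A)%:R : R) = #|A|%:R.
Proof.
rewrite -sum1_card natr_sum [RHS]big_mkcond.
by apply: eq_bigr => x _; case: (x \in A).
Qed.

Lemma eq_set2 (T : finType) (i j k l : T) : i != j ->
  ([set k; l] == [set i; j]) = ((k == i) && (l == j)) || ((k == j) && (l == i)).
Proof.
move=> ij; apply/eqP/idP => [kl | ]; last first.
  by case/orP => /andP [/eqP-> /eqP->]; rewrite // setUC.
have : i \in [set k; l] by rewrite kl set21.
have : j \in [set k; l] by rewrite kl set22.
rewrite !in_set2 => /orP [] /eqP jE /orP [] /eqP iE;
  by move: ij; rewrite jE iE ?eqxx ?orbT.
Qed.

Section Counting.
Variables (R : pzRingType) (n : nat).

Lemma sum_eq_ord (a : 'I_n) : \sum_j ((j == a)%:R : R) = 1.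
Proof. by rewrite (sum_nat_mem _ (pred1 a)) card1. Qed.

Lemma sum_neq_ord (i : 'I_n) : \sum_j ((i != j)%:R : R) = n%:R - 1.
Proof.
transitivity (\sum_(j < n) (1 - (j == i)%:R : R)).
  by apply: eq_bigr => j _; rewrite eq_sym; case: (j == i); rewrite ?subr0 ?subrr.
by rewrite sumrB sum_eq_ord sumr_const card_ord.
Qed.

Lemma sum_neq_set2_eq (i j : 'I_n) : i != j ->
  \sum_(y : 'I_n * 'I_n) ((y.1 != y.2)%:R * ([set i; j] == [set y.1; y.2])%:R : R) = 2.
Proof.
move=> ij; have ji : (i, j) != (j, i) by rewrite xpair_eqE negb_and ij.
transitivity (#|[set (i, j); (j, i)]|%:R : R); last by rewrite cards2 ji.
rewrite -sum_nat_mem.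
apply: eq_bigr => -[k l] _; rewrite -natrM mulnb in_set2 !xpair_eqE /=.
rewrite [[set i; j] == _]eq_sym eq_set2 //; case: (eqVneq k l) => [<- | //].
have kij : (k == i) && (k == j) = false.
  by apply/negP => /andP [/eqP ki /eqP kj]; move: ij; rewrite -ki -kj eqxx.
by rewrite [(k == j) && _]andbC kij.
Qed.

End Counting.

Section RandomGraph.
Variables (R : realType) (n : nat) (p : R).
Local Notation w := (gnp_prob p).
Local Notation a E i j := ((adj E i j)%:R : R).
Implicit Types (E : {set {set 'I_n}}) (f g : {set {set 'I_n}} -> R).

Lemma eq_gnp_expect f g : f =1 g -> gnp_expect p f = gnp_expect p g.
Proof. by move=> fg; apply: eq_bigr => E _; rewrite fg. Qed.

Lemma gnp_expect_sum (I : finType) (F : I -> {set {set 'I_n}} -> R) :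
  gnp_expect p (fun E => \sum_i F i E) = \sum_i gnp_expect p (F i).
Proof. by rewrite /gnp_expect -exchange_big; apply: eq_bigr => E _; rewrite mulr_sumr. Qed.

Lemma gnp_expectD f g :
  gnp_expect p (fun E => f E + g E) = gnp_expect p f + gnp_expect p g.
Proof. by rewrite /gnp_expect -big_split; apply: eq_bigr => E _; rewrite mulrDr. Qed.

Lemma gnp_expectZ c f : gnp_expect p (fun E => c * f E) = c * gnp_expect p f.
Proof. by rewrite /gnp_expect mulr_sumr; apply: eq_bigr => E _; rewrite mulrCA. Qed.

Lemma gnp_expectB f g :
  gnp_expect p (fun E => f E - g E) = gnp_expect p f - gnp_expect p g.
Proof. by rewrite /gnp_expect -sumrB; apply: eq_bigr => E _; rewrite mulrBr. Qed.

(* [w J * (S \subset J)] is the product over all [t] of [F t] (for [t \in J]) and [G t]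
   (for [t \notin J]), so summing over [J] expands [\prod_t (F t + G t)]. *)
Lemma gnp_expect_subset (S : {set {set 'I_n}}) : S \subset pairs n ->
  gnp_expect p (fun E => (S \subset E)%:R) = p ^+ #|S|.
Proof.
move=> SP; pose F t := if t \in pairs n then p else 0.
pose G t := if t \in S then 0 else if t \in pairs n then 1 - p else 1.
have FG : \prod_t (F t + G t) = p ^+ #|S|.
  rewrite -prodr_const [RHS]big_mkcond /=; apply: eq_bigr => t _.
  rewrite /F /G; case: (boolP (t \in S)) => [tS | _]; first by rewrite (subsetP SP) ?addr0.
  by case: (t \in pairs n); rewrite ?add0r ?subrKC.
rewrite -FG (bigA_distr 1 +%R) /=; apply: eq_bigr => J _.
rewrite /gnp_prob; case: (boolP (J \subset pairs n)) => JP; last first.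
  have [t tJ tP] := subsetPn JP.
  by rewrite mul0r (bigD1 t) //= tJ /F (negbTE tP) mul0r.
case: (boolP (S \subset J)) => SJ; last first.
  have [t tS tJ] := subsetPn SJ.
  by rewrite mulr0 (bigD1 t) //= (negbTE tJ) /G tS mul0r.
rewrite mulr1 (bigID (mem J)) /=; congr (_ * _).
  rewrite -prodr_const; apply: eq_bigr => t tJ.
  by rewrite tJ /F (subsetP JP).
have -> : (#|pairs n| - #|J|)%N = #|pairs n :\: J|.
  by rewrite cardsD (setIidPr JP).
rewrite -prodr_const big_mkcond [RHS]big_mkcond /=; apply: eq_bigr => t _.
rewrite in_setD; case: (boolP (t \in J)) => //= tJ.
rewrite /G; case: (boolP (t \in S)) => [tS | _]; first by rewrite (subsetP SJ) in tJ.
by case: (t \in pairs n).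
Qed.

Lemma gnp_expect_cst c : gnp_expect p (fun _ : {set {set 'I_n}} => c) = c.
Proof.
have := gnp_expect_subset (sub0set (pairs n)); rewrite cards0 expr0 /gnp_expect => w1.
rewrite -mulr_suml -[RHS]mul1r -w1; congr (_ * _).
by apply: eq_bigr => E _; rewrite sub0set mulr1.
Qed.

Lemma gnp_expect_adjM i j k l :
  gnp_expect p (fun E => a E i j * a E k l) =
  (i != j)%:R * (k != l)%:R * (p ^+ 2 + p * (1 - p) * ([set i; j] == [set k; l])%:R).
Proof.
have [<- | ij] := eqVneq i j.
  rewrite !mul0r -[0](gnp_expect_cst 0).
  by apply: eq_gnp_expect => E; rewrite adjnn !mul0r.
have [<- | kl] := eqVneq k l.
  rewrite mulr0 !mul0r -[0](gnp_expect_cst 0).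
  by apply: eq_gnp_expect => E; rewrite adjnn !mulr0.
have S_pairs : [set [set i; j]; [set k; l]] \subset pairs n.
  by rewrite subUset !sub1set !inE !cards2 ij kl.
rewrite !mul1r; transitivity (p ^+ #|[set [set i; j]; [set k; l]]|).
  rewrite -(gnp_expect_subset S_pairs); apply: eq_gnp_expect => E.
  by rewrite subUset !sub1set -natrM mulnb /adj ij kl.
by rewrite cards2; case: eqVneq => _ /=; ring.
Qed.

Lemma gnp_expect_adj i j : gnp_expect p (fun E => a E i j) = (i != j)%:R * p.
Proof.
transitivity (gnp_expect p (fun E => a E i j * a E i j)).
  by apply: eq_gnp_expect => E; case: adj; rewrite ?mulr1 ?mulr0.
by rewrite gnp_expect_adjM eqxx mulr1; case: (i != j) => /=; ring.
Qed.

Section Probability.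
Hypothesis p01 : 0 <= p <= 1.

Lemma gnp_prob_ge0 E : 0 <= w E.
Proof.
case/andP: p01 => p_ge0 p_le1; rewrite /gnp_prob; case: ifP => // _.
by rewrite mulr_ge0 ?exprn_ge0 ?subr_ge0.
Qed.

Lemma ler_gnp_expect f g : (forall E, f E <= g E) -> gnp_expect p f <= gnp_expect p g.
Proof. by move=> fg; apply: ler_sum => E _; rewrite ler_wpM2l ?gnp_prob_ge0. Qed.

Lemma gnp_expect_sqr_le f : gnp_expect p f ^+ 2 <= gnp_expect p (fun E => f E ^+ 2).
Proof.
set mu := gnp_expect p f.
have : 0 <= gnp_expect p (fun E => (f E - mu) ^+ 2).
  by apply: sumr_ge0 => E _; rewrite mulr_ge0 ?gnp_prob_ge0 ?sqr_ge0.
have -> : gnp_expect p (fun E => (f E - mu) ^+ 2) =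
          gnp_expect p (fun E => f E ^+ 2 - (2 * mu) * f E + mu ^+ 2).
  by apply: eq_gnp_expect => E; ring.
by rewrite gnp_expectD gnp_expectB gnp_expectZ gnp_expect_cst -/mu; nra.
Qed.

End Probability.

End RandomGraph.

Section LaplacianMoments.
Variables (R : realType) (n : nat) (p : R).
Local Notation a E i j := ((adj E i j)%:R : R).
Local Notation L E := (laplacian R E).
Implicit Types E : {set {set 'I_n}}.

Lemma gnp_expect_degree (i : 'I_n) : gnp_expect p (fun E => degree R E i) = (n%:R - 1) * p.
Proof.
rewrite /degree gnp_expect_sum; under eq_bigr do rewrite gnp_expect_adj.
by rewrite -mulr_suml sum_neq_ord.
Qed.

Lemma gnp_expect_degree_sqr (i : 'I_n) : gnp_expect p (fun E => degree R E i ^+ 2) =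
  (n%:R - 1) ^+ 2 * p ^+ 2 + (n%:R - 1) * p * (1 - p).
Proof.
have set2_i j k : (i != j)%:R * (i != k)%:R * ([set i; j] == [set i; k])%:R =
                  (i != j)%:R * (k == j)%:R :> R.
  have [<- | ik] := eqVneq i k.
    by rewrite mulr0 mul0r -natrM mulnb andNb.
  by rewrite eq_set2 // eqxx (negbTE ik) /= orbF mulr1n mulr1 [k == j]eq_sym.
transitivity (\sum_j \sum_k ((i != j)%:R * p ^+ 2 * (i != k)%:R +
                             p * (1 - p) * ((i != j)%:R * (k == j)%:R))).
  transitivity (gnp_expect p (fun E => \sum_j \sum_k a E i j * a E i k)).
    by apply: eq_gnp_expect => E; rewrite /degree expr2 big_distrlr.
  rewrite gnp_expect_sum; apply: eq_bigr => j _.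
  rewrite gnp_expect_sum; apply: eq_bigr => k _.
  by rewrite -set2_i gnp_expect_adjM; ring.
under eq_bigr do rewrite big_split /= -!mulr_sumr sum_neq_ord sum_eq_ord mulr1.
by rewrite big_split /= -!mulr_suml -mulr_sumr sum_neq_ord; ring.
Qed.

Lemma gnp_expect_mxtrace :
  gnp_expect p (fun E => \tr (L E)) = n%:R * (n%:R - 1) * p.
Proof.
under eq_gnp_expect do rewrite mxtrace_laplacian.
rewrite gnp_expect_sum; under eq_bigr do rewrite gnp_expect_degree.
by rewrite sumr_const card_ord mulr_natl mulrnAl.
Qed.

Lemma gnp_expect_mxtrace_sqr :
  gnp_expect p (fun E => \tr (L E *m L E)) =
  n%:R * ((n%:R - 1) ^+ 2 * p ^+ 2 + (n%:R - 1) * p * (1 - p) + (n%:R - 1) * p).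
Proof.
under eq_gnp_expect do rewrite mxtrace_laplacian_sqr.
rewrite gnp_expect_sum.
under eq_bigr do rewrite gnp_expectD gnp_expect_degree_sqr gnp_expect_degree.
by rewrite sumr_const card_ord mulr_natl.
Qed.

Lemma gnp_expect_sqr_mxtrace :
  gnp_expect p (fun E => \tr (L E) ^+ 2) =
  (n%:R * (n%:R - 1)) ^+ 2 * p ^+ 2 + 2 * (n%:R * (n%:R - 1)) * p * (1 - p).
Proof.
pose c (x : 'I_n * 'I_n) : R := (x.1 != x.2)%:R.
have sum_c : \sum_x c x = n%:R * (n%:R - 1).
  rewrite -(pair_bigA _ (fun i j => (i != j)%:R)) /=.
  by under eq_bigr do rewrite sum_neq_ord; rewrite sumr_const card_ord mulr_natl.
have sum_c_set2 x : c x * \sum_y c y * ([set x.1; x.2] == [set y.1; y.2])%:R = c x * 2.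
  by rewrite /c; case: (eqVneq x.1 x.2) => [_ | ne]; rewrite ?mul0r ?sum_neq_set2_eq.
transitivity (\sum_x \sum_y (c x * p ^+ 2 * c y +
                             p * (1 - p) * (c x * (c y * ([set x.1; x.2] == [set y.1; y.2])%:R)))).
  transitivity (gnp_expect p (fun E => \sum_x \sum_y a E x.1 x.2 * a E y.1 y.2)).
    apply: eq_gnp_expect => E; rewrite mxtrace_laplacian /degree pair_bigA.
    by rewrite expr2 big_distrlr.
  rewrite gnp_expect_sum; apply: eq_bigr => x _.
  rewrite gnp_expect_sum; apply: eq_bigr => y _.
  by rewrite gnp_expect_adjM /c; ring.
under eq_bigr do rewrite big_split /= -!mulr_sumr sum_c sum_c_set2.
by rewrite big_split /= -!mulr_suml -mulr_sumr -mulr_suml sum_c; ring.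
Qed.

Lemma gnp_expect_laplacian_dispersion :
  gnp_expect p (fun E => (n%:R - 1) * \tr (L E *m L E) - \tr (L E) ^+ 2) =
  2 * n%:R * (n%:R - 1) * (n%:R - 2) * p * (1 - p).
Proof.
rewrite gnp_expectB gnp_expectZ gnp_expect_mxtrace_sqr gnp_expect_sqr_mxtrace; ring.
Qed.

End LaplacianMoments.

Section ExpectedAlgebraicConnectivity.
Variables (R : realType) (n : nat) (p : R).
Hypotheses (n_gt1 : (1 < n)%N) (p01 : 0 <= p <= 1).
Local Notation L E := (laplacian R E).
Local Notation mu := (gnp_expect p (@alg_conn R n)).

Let KE : n.-1%:R = n%:R - 1 :> R.
Proof. by rewrite -[in RHS](prednK (ltnW n_gt1)) mulrSr addrK. Qed.

Let K_gt0 : 0 < n.-1%:R :> R.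
Proof. by rewrite ltr0n -ltnS prednK // ltnW. Qed.

Lemma gnp_expect_alg_conn_ge0 : 0 <= mu.
Proof.
rewrite -[0](@gnp_expect_cst R n p 0).
by apply: (ler_gnp_expect p01) => E; apply: alg_conn_ge0.
Qed.

Lemma gnp_expect_alg_conn_le : mu <= n%:R * p.
Proof.
have lambda2_le (E : {set {set 'I_n}}) : n.-1%:R * alg_conn R E <= \tr (L E).
  exact: alg_conn_le_mxtrace.
rewrite -(ler_pM2l K_gt0) -gnp_expectZ (le_trans (ler_gnp_expect p01 lambda2_le)) //.
by rewrite gnp_expect_mxtrace KE mulrCA mulrA.
Qed.

(* Jensen's inequality for [X := tr L - (n - 1) lambda_2], whose mean is [(n - 1) (n p - mu)]. *)
Lemma sqr_sub_gnp_expect_alg_conn_le :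
  (n%:R * p - mu) ^+ 2 <= 2 * n%:R * (n%:R - 2) * p * (1 - p).
Proof.
pose X (E : {set {set 'I_n}}) := \tr (L E) - n.-1%:R * alg_conn R E.
have EX : gnp_expect p X = n.-1%:R * (n%:R * p - mu).
  by rewrite gnp_expectB gnp_expectZ gnp_expect_mxtrace KE; ring.
have X_sqr_le E : X E ^+ 2 <= n.-1%:R * (n.-1%:R * \tr (L E *m L E) - \tr (L E) ^+ 2).
  exact: sqr_mxtrace_sub_alg_conn_le.
rewrite -(ler_pM2l (exprn_gt0 2 K_gt0)) -exprMn -EX.
apply: le_trans (gnp_expect_sqr_le p01 X) (le_trans (ler_gnp_expect p01 X_sqr_le) _).
by rewrite gnp_expectZ KE gnp_expect_laplacian_dispersion; lra.
Qed.

End ExpectedAlgebraicConnectivity.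

Unset Implicit Arguments.

Theorem lemma7 (R : realType) (n : nat) (p : R) :
  (2 <= n)%N -> 0 < p < 1 ->
  let q := 1 - p in
  Num.max (n%:R * p - Num.sqrt (2 * n%:R * (n%:R - 2) * p * q)) 0
    <= gnp_expect p (@alg_conn R n)
  /\ gnp_expect p (@alg_conn R n) <= n%:R * p.
Proof.
move=> n_gt1 /andP [p_gt0 p_lt1] q.
have p01 : 0 <= p <= 1 by rewrite !ltW.
split; last exact: gnp_expect_alg_conn_le.
rewrite ge_max gnp_expect_alg_conn_ge0 // andbT.
rewrite lerBlDr -lerBlDl (le_trans (ler_norm _)) // -sqrtr_sqr.
exact/ler_wsqrtr/sqr_sub_gnp_expect_alg_conn_le.
Qed.
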